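(* Let $R,C>0$, $\kappa\ge1>\overline\lambda>\underline\lambda>0$ and $\alpha\in(0,1)$. Then there exist $\xi_0>0$ and $\overline\kappa>1$ such that every infinite sequence $\{h_j\}_{j=1}^\infty$ satisfying, for all $j$: (H0) $h_j:B_R\to h_j(B_R)$ is a $\mathcal{C}^{1+\alpha}$ diffeomorphism with $h_j(0)=0$; (H1) $\|h_j\|_{\mathcal{C}^{1+\alpha}}<C$; (H2) $\underline\lambda<m(D_yh_j)\le\|D_yh_j\|<\overline\lambda$ for all $y\in B_R$; (H3) $D_0h^j$ is $\kappa$-conformal — is $\overline\kappa$-conformal at every point of $B_{\xi_0}$, i.e. $D_xh^n$ is $\overline\kappa$-conformal for all $x\in B_{\xi_0}$ and all $n\in\mathbb{N}$.
   Context: $B_r$ is the open Euclidean ball about $0$ in $\mathbb{R}^d$; $h^n=h_n\circ\cdots\circ h_1$; $m(D)=\inf_{|v|=1}|Dv|$; $D$ is $\kappa$-conformal if $\|D\|\,\|D^{-1}\|\le\kappa$; $\|h\|_{\mathcal{C}^{1+\alpha}}=\|h\|_{\mathcal{C}^1}+\sup\{\|D_xh-D_yh\|/|x-y|^\alpha:0<|x-y|<1\}$. *)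

From HB Require Import structures.
From mathcomp Require Import all_boot all_order all_algebra.
From mathcomp Require Import all_classical all_reals all_analysis.
Set Implicit Arguments. Unset Strict Implicit. Unset Printing Implicit Defensive.
Import Order.TTheory GRing.Theory Num.Theory.
Import numFieldNormedType.Exports.
Local Open Scope classical_set_scope.
Local Open Scope ring_scope.

Section Defs.
Variables (R : realType) (d : nat).
Notation vec := 'rV[R]_d.

Definition enorm (v : vec) : R := Num.sqrt (\sum_(i < d) (v ord0 i) ^+ 2).

Definition Bball (r : R) : set vec := [set x | enorm x < r].

(* a linear map R^d -> R^d is represented by a matrix D acting by v |-> v *m D *)
Definition unit_sphere : set vec := [set v | enorm v = 1].

Definition opnorm (D : 'M[R]_d) : R := sup [set enorm (v *m D) | v in unit_sphere].

Definition mnorm (D : 'M[R]_d) : R := inf [set enorm (v *m D) | v in unit_sphere].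

Definition conformal (kappa : R) (D : 'M[R]_d) : Prop :=
  D \in unitmx /\ opnorm D * opnorm (invmx D) <= kappa.

Definition jac (f : vec -> vec) (x : vec) : 'M[R]_d :=
  \matrix_(i < d, j < d) ('d f x (delta_mx ord0 i : vec)) ord0 j.

Definition C1_on (U : set vec) (f : vec -> vec) : Prop :=
  (forall x, U x -> differentiable f x) /\
  (forall x, U x -> {for x, continuous (jac f)}).

Definition C1alpha_norm (Rr alpha : R) (h : vec -> vec) : \bar R :=
  (ereal_sup [set (enorm (h x))%:E | x in Bball Rr] +
   ereal_sup [set (opnorm (jac h x))%:E | x in Bball Rr] +
   ereal_sup [set e | exists x y, [/\ Bball Rr x, Bball Rr y,
                (0 < enorm (x - y) < 1)%R &
                e = ((opnorm (jac h x - jac h y) / (enorm (x - y)) `^ alpha)%R)%:E]])%E.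

Definition C1alpha_diffeo (Rr alpha : R) (h : vec -> vec) : Prop :=
  [/\ C1_on (Bball Rr) h,
      (exists K : R, forall x y, Bball Rr x -> Bball Rr y ->
          opnorm (jac h x - jac h y) <= K * (enorm (x - y)) `^ alpha),
      {in Bball Rr &, injective h},
      open (h @` Bball Rr) &
      exists g : vec -> vec,
        (forall x, Bball Rr x -> g (h x) = x) /\
        (forall y, (h @` Bball Rr) y -> Bball Rr (g y) /\ h (g y) = y) /\
        C1_on (h @` Bball Rr) g].

(* iterates: h^0 = id, h^(n+1) = h_(n+1) o h^n, where h_(j+1) is hs j *)
Fixpoint iter_seq (hs : nat -> vec -> vec) (n : nat) : vec -> vec :=
  match n with
  | O => id
  | S n' => hs n' \o iter_seq hs n'
  end.

End Defs.

From HB Require Import structures.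
From mathcomp Require Import all_boot all_order all_algebra.
From mathcomp Require Import all_classical all_reals all_analysis.
From mathcomp Require Import ring lra.
Set Implicit Arguments. Unset Strict Implicit. Unset Printing Implicit Defensive.
Import Order.TTheory GRing.Theory Num.Theory.
Import numFieldNormedType.Exports.
Local Open Scope classical_set_scope.
Local Open Scope ring_scope.

(* Conformality of the iterates h^n = h_n o ... o h_1 near their common fixed
   point 0.  Write Q_n = D_x h^n, P_n = D_0 h^n, J_n = D_{h^n x} h_{n+1} and
   A_n = D_0 h_{n+1}, so that Q_{n+1} = Q_n J_n and P_{n+1} = P_n A_n.  Then
   M_n = Q_n P_n^{-1} satisfies M_{n+1} = M_n (1 + G_n) with
   G_n = P_n (J_n - A_n) A_n^{-1} P_n^{-1}.  Since the maps contract by lamU,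
   |h^n x| <= lamU^n |x|, and the Hoelder bound on the derivative gives
   ||G_n|| <= kappa C lamL^{-1} (lamU^alpha)^n |x|^alpha, a geometric sequence
   whose sum is at most 1/2 when |x| is small.  Hence ||M_n|| and ||M_n^{-1}||
   stay below 2, M_n is 4-conformal, and Q_n = M_n P_n is 4 kappa-conformal. *)

Section EuclideanNorm.
Variables (R : realType) (d : nat).
Implicit Types (u v w : 'rV[R]_d).

Definition dotv u v : R := \sum_(i < d) u ord0 i * v ord0 i.

Lemma dotvv v : dotv v v = \sum_(i < d) (v ord0 i) ^+ 2.
Proof. by apply: eq_bigr => i _; rewrite expr2. Qed.

Lemma dotvv_ge0 v : 0 <= dotv v v.
Proof. by rewrite dotvv; apply: sumr_ge0 => i _; rewrite sqr_ge0. Qed.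

Lemma dotvC u v : dotv u v = dotv v u.
Proof. by apply: eq_bigr => i _; rewrite mulrC. Qed.

Lemma dotvDl u v w : dotv (u + v) w = dotv u w + dotv v w.
Proof. by rewrite /dotv -big_split; apply: eq_bigr => i _; rewrite mxE mulrDl. Qed.

Lemma enorm_ge0 v : 0 <= enorm v.
Proof. exact: sqrtr_ge0. Qed.

Lemma enorm_sq v : enorm v ^+ 2 = dotv v v.
Proof. by rewrite /enorm sqr_sqrtr -?dotvv // dotvv_ge0. Qed.

Lemma enorm_eq0 v : enorm v = 0 -> v = 0.
Proof.
move=> v0; have : \sum_(i < d) (v ord0 i) ^+ 2 = 0.
  apply/eqP; rewrite eq_le -dotvv dotvv_ge0 andbT.
  by rewrite -sqrtr_eq0 -/(enorm v) v0.
move=> /psumr_eq0P vi0; apply/rowP => i; rewrite mxE.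
by apply/eqP; rewrite -sqrf_eq0; apply/eqP; apply: vi0 => // j _; rewrite sqr_ge0.
Qed.

Lemma enorm_gt0 v : v != 0 -> 0 < enorm v.
Proof. by move=> v0; rewrite lt_def enorm_ge0 andbT; apply: contra v0 => /eqP/enorm_eq0 ->. Qed.

Lemma enorm0 : enorm (0 : 'rV[R]_d) = 0.
Proof. by rewrite /enorm big1 ?sqrtr0 // => i _; rewrite mxE expr0n. Qed.

Lemma enormZ (a : R) v : enorm (a *: v) = `|a| * enorm v.
Proof.
rewrite /enorm -sqrtr_sqr -sqrtrM ?sqr_ge0 //; congr Num.sqrt.
by rewrite mulr_sumr; apply: eq_bigr => i _; rewrite mxE exprMn.
Qed.

Lemma enormN v : enorm (- v) = enorm v.
Proof. by rewrite -scaleN1r enormZ normrN normr1 mul1r. Qed.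

(* Cauchy-Schwarz, from the expansion of |(|v|) u - (|u|) v|^2 >= 0. *)
Lemma dotv_CS u v : dotv u v <= enorm u * enorm v.
Proof.
set a := enorm v; set b := enorm u.
have a0 : 0 <= a by exact: enorm_ge0.
have b0 : 0 <= b by exact: enorm_ge0.
have expand : \sum_(i < d) (a * u ord0 i - b * v ord0 i) ^+ 2 =
    a ^+ 2 * b ^+ 2 * 2 - 2 * a * b * dotv u v.
  have eu : b ^+ 2 = \sum_(i < d) (u ord0 i) ^+ 2 by rewrite /b enorm_sq dotvv.
  have ev : a ^+ 2 = \sum_(i < d) (v ord0 i) ^+ 2 by rewrite /a enorm_sq dotvv.
  transitivity (a ^+ 2 * \sum_(i < d) (u ord0 i) ^+ 2 - 2 * a * b * dotv u v
                 + b ^+ 2 * \sum_(i < d) (v ord0 i) ^+ 2); last by rewrite -eu -ev; ring.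
  rewrite /dotv !mulr_sumr -sumrN -!big_split /=; apply: eq_bigr => i _; ring.
have key : 0 <= a ^+ 2 * b ^+ 2 * 2 - 2 * a * b * dotv u v.
  by rewrite -expand; apply: sumr_ge0 => i _; rewrite sqr_ge0.
have [ab0|ab0] := eqVneq (a * b) 0.
  have : (a == 0) || (b == 0) by rewrite -mulf_eq0 ab0.
  case/orP=> [/eqP/enorm_eq0 -> | /eqP/enorm_eq0 ->];
    by rewrite /dotv big1 ?mulr_ge0 // => i _; rewrite mxE ?mulr0 ?mul0r.
have abgt : 0 < a * b by rewrite lt_def ab0 /=; exact: mulr_ge0.
have two_ab : 0 < 2 * (a * b) by lra.
by rewrite [b * a]mulrC -(ler_pM2l two_ab); lra.
Qed.

Lemma enormD u v : enorm (u + v) <= enorm u + enorm v.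
Proof.
rewrite -(ler_sqr (enorm_ge0 _)); last by rewrite nnegrE addr_ge0 ?enorm_ge0.
rewrite enorm_sq dotvDl !(dotvC _ (u + v)) !dotvDl -!enorm_sq sqrrD (dotvC v u).
have := dotv_CS u v; lra.
Qed.

Lemma enormB u v : enorm u - enorm v <= enorm (u - v).
Proof. have := enormD (u - v) v; rewrite subrK; lra. Qed.

Lemma coord_le_enorm v i : `|v ord0 i| <= enorm v.
Proof.
rewrite -sqrtr_sqr /enorm ler_sqrt; last by apply: sumr_ge0 => j _; rewrite sqr_ge0.
by rewrite (bigD1 i) //= lerDl; apply: sumr_ge0 => j _; rewrite sqr_ge0.
Qed.

Lemma enorm_sum (I : finType) (F : I -> 'rV[R]_d) :
  enorm (\sum_i F i) <= \sum_i enorm (F i).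
Proof.
apply: (big_ind2 (fun x y => enorm x <= y)) => //; first by rewrite enorm0.
by move=> x1 x2 y1 y2 h1 h2; apply: le_trans (enormD _ _) _; exact: lerD.
Qed.

End EuclideanNorm.

Section OperatorNorm.
Variables (R : realType) (d : nat).
Implicit Types (v : 'rV[R]_d) (A B D G : 'M[R]_d).

Notation sphere_image D := [set enorm (v *m D) | v in unit_sphere (R:=R) (d:=d)].

(* Normalising v rescales |v D| by |v|; this reduces statements about all
   vectors to statements about unit vectors. *)
Lemma enorm_mulmx_normalized v D : v != 0 ->
  unit_sphere ((enorm v)^-1 *: v) /\
  enorm (v *m D) = enorm v * enorm (((enorm v)^-1 *: v) *m D).
Proof.
move=> v0; have ev0 : enorm v != 0 by rewrite gt_eqF ?enorm_gt0.
split; first by rewrite /unit_sphere /= enormZ ger0_norm ?invr_ge0 ?enorm_ge0 ?mulVf.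
by rewrite -scalemxAl enormZ ger0_norm ?invr_ge0 ?enorm_ge0 // mulrA mulfV ?mul1r.
Qed.

Lemma opnorm_hasub D : has_ubound (sphere_image D).
Proof.
exists (\sum_i enorm (row i D)) => _ [v vS <-].
rewrite mulmx_sum_row; apply: le_trans (enorm_sum _) _.
apply: ler_sum => i _; rewrite enormZ.
by apply: ler_piMl; [exact: enorm_ge0 | rewrite -vS coord_le_enorm].
Qed.

(* The supremum defining ||D|| is over the empty set when d = 0. *)
Lemma sphere_image_cases D : sphere_image D !=set0 \/ sphere_image D = set0.
Proof.
case: (pselect (sphere_image D !=set0)) => [|ne]; [by left|right].
by apply/seteqP; split => // x Sx; apply: ne; exists x.
Qed.

Lemma opnorm_ub D v : enorm (v *m D) <= opnorm D * enorm v.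
Proof.
have [->|v0] := eqVneq v 0; first by rewrite mul0mx enorm0 mulr0.
have [vS ->] := enorm_mulmx_normalized D v0.
rewrite mulrC ler_wpM2r ?enorm_ge0 //.
by apply: (ub_le_sup (opnorm_hasub D)); exists ((enorm v)^-1 *: v).
Qed.

Lemma opnorm_le D (b : R) :
  0 <= b -> (forall v, enorm v = 1 -> enorm (v *m D) <= b) -> opnorm D <= b.
Proof.
move=> b0 Db; rewrite /opnorm; case: (sphere_image_cases D) => [ne|->].
  by apply: ge_sup => // _ [v vS <-]; exact: Db.
by rewrite sup0.
Qed.

Lemma opnorm_ge0 D : 0 <= opnorm D.
Proof.
rewrite /opnorm; case: (sphere_image_cases D) => [[e De]|->]; last by rewrite sup0.
apply: le_trans (ub_le_sup (opnorm_hasub D) De).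
by case: De => v _ <-; exact: enorm_ge0.
Qed.

Lemma opnormM A B : opnorm (A *m B) <= opnorm A * opnorm B.
Proof.
apply: opnorm_le; first by rewrite mulr_ge0 ?opnorm_ge0.
move=> v v1; rewrite mulmxA; apply: le_trans (opnorm_ub _ _) _.
rewrite [X in _ <= X]mulrC ler_wpM2l ?opnorm_ge0 //.
by apply: le_trans (opnorm_ub _ _) _; rewrite v1 mulr1.
Qed.

Lemma opnormD A B : opnorm (A + B) <= opnorm A + opnorm B.
Proof.
apply: opnorm_le; first by rewrite addr_ge0 ?opnorm_ge0.
move=> v v1; rewrite mulmxDr; apply: le_trans (enormD _ _) _.
by apply: lerD; apply: le_trans (opnorm_ub _ _) _; rewrite v1 mulr1.
Qed.

Lemma opnorm1 : opnorm (1%:M : 'M[R]_d) <= 1.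
Proof. by apply: opnorm_le => // v v1; rewrite mulmx1 v1. Qed.

Lemma opnorm0 : opnorm (0 : 'M[R]_d) = 0.
Proof.
by apply/eqP; rewrite eq_le opnorm_ge0 andbT; apply: opnorm_le => // v _; rewrite mulmx0 enorm0.
Qed.

Lemma opnorm_conj A B :
  opnorm (A *m B *m invmx A) <= opnorm A * opnorm (invmx A) * opnorm B.
Proof.
apply: le_trans (opnormM _ _) _.
rewrite mulrAC ler_wpM2r ?opnorm_ge0 //; exact: opnormM.
Qed.

Lemma mnorm_lb D v : mnorm D * enorm v <= enorm (v *m D).
Proof.
have [->|v0] := eqVneq v 0; first by rewrite mul0mx enorm0 mulr0.
have [vS ->] := enorm_mulmx_normalized D v0.
rewrite mulrC ler_wpM2l ?enorm_ge0 //.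
have hl : has_lbound (sphere_image D) by exists 0 => _ [w _ <-]; exact: enorm_ge0.
by apply: (ge_inf hl); exists ((enorm v)^-1 *: v).
Qed.

Lemma lowerb_inv A (c : R) :
  0 < c -> (forall v, c * enorm v <= enorm (v *m A)) ->
  A \in unitmx /\ opnorm (invmx A) <= c^-1.
Proof.
move=> c0 Ac.
have uA : A \in unitmx.
  rewrite unitmxE unitfE; apply/negP => /det0P [v v0 vA].
  by have := Ac v; rewrite vA enorm0 pmulr_rle0 // leNgt enorm_gt0.
split=> //; apply: opnorm_le; first by rewrite invr_ge0 ltW.
move=> v v1; have := Ac (v *m invmx A); rewrite mulmxKV // v1.
by rewrite mulrC -ler_pdivlMr // div1r.
Qed.

Lemma mnorm_inv A : 0 < mnorm A -> A \in unitmx /\ opnorm (invmx A) <= (mnorm A)^-1.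
Proof. by move=> m0; apply: lowerb_inv => // v; exact: mnorm_lb. Qed.

Lemma pert_inv G (t : R) :
  opnorm G <= t -> t < 1 ->
  (1%:M + G) \in unitmx /\ opnorm (invmx (1%:M + G)) <= (1 - t)^-1.
Proof.
move=> Gt t1; apply: lowerb_inv; first by rewrite subr_gt0.
move=> v; rewrite mulmxDr mulmx1.
have := enormB v (- (v *m G)); rewrite opprK enormN.
have := opnorm_ub G v; have := enorm_ge0 v.
have : opnorm G * enorm v <= t * enorm v by rewrite ler_wpM2r ?enorm_ge0.
lra.
Qed.

Lemma invmxM A B :
  A \in unitmx -> B \in unitmx -> invmx (A *m B) = invmx B *m invmx A.
Proof.
move=> uA uB; have uAB : A *m B \in unitmx by rewrite unitmx_mul uA.
apply: (can_inj (mulKmx uAB)); rewrite mulmxV //.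
by rewrite !mulmxA mulmxK // mulmxV.
Qed.

Lemma conformal1 (kappa : R) : 1 <= kappa -> conformal kappa (1%:M : 'M[R]_d).
Proof.
move=> k1; split; first exact: unitmx1.
rewrite invmx1; apply: le_trans k1; rewrite -[1 in X in _ <= X](mulr1 1).
by apply: ler_pM; rewrite ?opnorm_ge0 ?opnorm1.
Qed.

Lemma conformalM (a b : R) A B :
  conformal a A -> conformal b B -> conformal (a * b) (A *m B).
Proof.
move=> [uA hA] [uB hB]; split; first by rewrite unitmx_mul uA.
rewrite invmxM //.
apply: le_trans (_ : (opnorm A * opnorm B) * (opnorm (invmx B) * opnorm (invmx A)) <= _).
  by apply: ler_pM; rewrite ?opnorm_ge0 ?opnormM.
have -> : opnorm A * opnorm B * (opnorm (invmx B) * opnorm (invmx A)) =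
   (opnorm A * opnorm (invmx A)) * (opnorm B * opnorm (invmx B)) by ring.
by apply: ler_pM; rewrite ?mulr_ge0 ?opnorm_ge0.
Qed.

End OperatorNorm.

Section Jacobian.
Variables (R : realType) (d : nat).
Implicit Types (f g : 'rV[R]_d -> 'rV[R]_d) (x : 'rV[R]_d).

Lemma row_jac f x i : row i (jac f x) = 'd f x (delta_mx 0 i).
Proof. by apply/rowP => j; rewrite !mxE. Qed.

Lemma jac_mul f x v : v *m jac f x = 'd f x v.
Proof.
rewrite mulmx_sum_row {2}(row_sum_delta v) linear_sum; apply: eq_bigr => i _.
by rewrite row_jac linearZ.
Qed.

Lemma jac_comp f g x : differentiable f x -> differentiable g (f x) ->
  jac (g \o f) x = jac f x *m jac g (f x).
Proof.
move=> df dg; apply/row_matrixP => i.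
rewrite (row_jac (g \o f)) row_mul (row_jac f) jac_mul.
exact: (congr1 (fun F => F (delta_mx 0 i)) (diff_comp df dg)).
Qed.

Lemma jac_id x : jac id x = 1%:M.
Proof.
apply/row_matrixP => i; rewrite (row_jac id) row1.
by have -> : 'd id x = id :> ('rV[R]_d -> 'rV[R]_d) := diff_val.
Qed.

Lemma dotv_linear (w : 'rV[R]_d) :
  exists L : {linear 'rV[R]_d -> R}, (forall u, L u = dotv u w) /\ continuous L.
Proof.
pose L := fun u : 'rV[R]_d => dotv u w.
have Llin : linear L.
  move=> a u v; have scaleE (s : R) : a *: s = a * s by [].
  rewrite /L /dotv scaleE mulr_sumr -big_split; apply: eq_bigr => i _.
  by rewrite !mxE mulrDl mulrA.
pose LL : {linear 'rV[R]_d -> R} := HB.pack L (GRing.isLinear.Build _ _ _ _ L Llin).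
exists LL; split => // u.
suff dL : differentiable L u by exact: differentiable_continuous.
have -> : L = \sum_(i < d) (fun u : 'rV[R]_d => u ord0 i *: (w ord0 i : R)).
  by rewrite fct_sumE; apply/funext => v.
apply: differentiable_sum => i.
apply: (@differentiableZl _ _ _ (fun u : 'rV[R]_d => u ord0 i)).
exact: differentiable_coord.
Qed.

(* Apply the one-variable mean value theorem to t |-> <h(t y), h y>. *)
Lemma contract (h : 'rV[R]_d -> 'rV[R]_d) (r lam : R) (y : 'rV[R]_d) :
  (forall z, Bball r z -> differentiable h z) ->
  (forall z, Bball r z -> opnorm (jac h z) <= lam) ->
  h 0 = 0 -> Bball r y -> enorm (h y) <= lam * enorm y.
Proof.
move=> dh oph h0 yB.
have [L [LE Lc]] := dotv_linear (h y).
pose s := ( *:%R ^~ y) : R -> 'rV[R]_d.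
pose phi := L \o (h \o s).
have sB (t : R) : 0 <= t <= 1 -> Bball r (s t).
  move=> /andP[t0 t1]; rewrite /Bball /= /s enormZ ger0_norm //.
  by apply: le_lt_trans yB; apply: ler_piMl => //; exact: enorm_ge0.
have ds (t : R) : differentiable s t by exact: ex_diff.
have dhs (t : R) : 0 <= t <= 1 -> differentiable (h \o s) t.
  by move=> ht; apply: differentiable_comp => //; exact: dh (sB _ ht).
have dphi (t : R) : 0 <= t <= 1 -> differentiable phi t.
  by move=> ht; apply: differentiable_comp (dhs _ ht) (linear_differentiable _ Lc).
have phi_der (t : R) : t \in `]0, 1[%R -> is_derive t (1 : R) phi ('D_1 phi t).
  rewrite in_itv /= => /andP[t0 t1]; apply: derivableP; apply: diff_derivable.
  by apply: dphi; rewrite !ltW.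
have phi_cont : {within `[0, 1], continuous phi}.
  apply: continuous_in_subspaceT => t; rewrite inE /= in_itv => tin.
  exact: differentiable_continuous (dphi _ tin).
have [c cin mvt] := MVT ltr01 phi_der phi_cont.
move: cin; rewrite in_itv /= => /andP[c0 c1].
have hc : 0 <= c <= 1 by rewrite !ltW.
have dc : 'D_1 phi c = L ('d h (s c) y).
  rewrite deriveE; last exact: dphi.
  have e1 : 'd phi c = 'd L ((h \o s) c) \o 'd (h \o s) c :> (R -> R).
    exact: diff_comp (dhs _ hc) (linear_differentiable _ Lc).
  have e2 : 'd L ((h \o s) c) = L :> (_ -> _) := diff_lin _ Lc.
  have e3 : 'd (h \o s) c = 'd h (s c) \o 'd s c :> (R -> _).
    exact: diff_comp (ds c) (dh _ (sB _ hc)).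
  have e4 : 'd s c = ( *:%R ^~ y) :> (R -> _) := diff_val.
  by rewrite e1 /= e2 e3 /= e4 /= scale1r.
have p1 : phi 1 = enorm (h y) ^+ 2 by rewrite /phi /= /s scale1r LE enorm_sq.
have p0 : phi 0 = 0 by rewrite /phi /= /s scale0r h0 linear0.
rewrite dc subr0 mulr1 p1 p0 subr0 LE -jac_mul in mvt.
have l0 : 0 <= lam by apply: le_trans (oph _ yB); exact: opnorm_ge0.
have f1 : enorm (y *m jac h (s c)) <= lam * enorm y.
  apply: le_trans (opnorm_ub _ _) _.
  by apply: ler_wpM2r; [exact: enorm_ge0 | exact: oph (sB _ hc)].
have f2 : enorm (h y) ^+ 2 <= lam * enorm y * enorm (h y).
  rewrite mvt; apply: le_trans (dotv_CS _ _) _.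
  by apply: ler_wpM2r; [exact: enorm_ge0 | exact: f1].
have [->|hy0] := eqVneq (enorm (h y)) 0; first by rewrite mulr_ge0 ?enorm_ge0.
by rewrite expr2 ler_pM2r ?lt_def ?hy0 ?enorm_ge0 in f2.
Qed.

End Jacobian.

Lemma holder_at0 (R : realType) (d : nat) (h : 'rV[R]_d -> 'rV[R]_d)
    (Rr alpha C : R) (y : 'rV[R]_d) :
  (C1alpha_norm Rr alpha h < C%:E)%E -> 0 <= C -> 0 < Rr -> Bball Rr y -> enorm y < 1 ->
  opnorm (jac h y - jac h 0) <= C * enorm y `^ alpha.
Proof.
move=> HC C0 R0 yB y1.
have [->|y0] := eqVneq y 0; first by rewrite subrr opnorm0 mulr_ge0 ?powR_ge0.
have ey := enorm_gt0 y0.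
have B0 : Bball Rr (0 : 'rV[R]_d) by rewrite /Bball /= enorm0.
move: HC; rewrite /C1alpha_norm.
set S1 := ereal_sup _; set S2 := ereal_sup _; set S3 := ereal_sup _ => HC.
have S10 : (0 <= S1)%E.
  apply: le_trans (ereal_sup_ubound _); last by exists 0.
  by rewrite lee_fin enorm_ge0.
have S20 : (0 <= S2)%E.
  apply: le_trans (ereal_sup_ubound _); last by exists 0.
  by rewrite lee_fin opnorm_ge0.
set e := opnorm (jac h y - jac h 0) / enorm (y - 0) `^ alpha.
have S3e : (e%:E <= S3)%E.
  by apply: ereal_sup_ubound; exists y, 0; split => //; rewrite subr0 ey.
have : (e%:E < C%:E)%E.
  by apply: le_lt_trans HC; apply: le_trans S3e _; rewrite lee_paddl // adde_ge0.
by rewrite lte_fin /e subr0 ltr_pdivrMr ?powR_gt0 // => /ltW.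
Qed.

Section RealEstimates.
Variable R : realType.

Lemma geom_le (q : R) n : 0 <= q -> q < 1 -> \sum_(k < n) q ^+ k <= (1 - q)^-1.
Proof.
move=> q0 q1.
have e : \sum_(k < n) q ^+ k * (1 - q) = 1 - q ^+ n.
  elim: n => [|n IH]; first by rewrite big_ord0 expr0 subrr.
  by rewrite big_ord_recr /= IH exprS; ring.
rewrite -[(1 - q)^-1]div1r ler_pdivlMr ?subr_gt0 // mulr_suml e.
by rewrite lerBlDr lerDl exprn_ge0.
Qed.

(* The two one-step inequalities driving the perturbed-product induction. *)
Lemma inv_sub_mulD (s g : R) : 0 <= s -> 0 <= g -> s + g <= 1/2 ->
  (1 - s)^-1 * (1 + g) <= (1 - (s + g))^-1.
Proof.
move=> s0 g0 sg; have p1 : 0 < 1 - s by lra.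
have p2 : 0 < 1 - (s + g) by lra.
rewrite mulrC ler_pdivrMr // mulrC ler_pdivlMr //; nra.
Qed.

Lemma inv_sub_mul (s g : R) : 0 <= s -> 0 <= g -> s + g <= 1/2 ->
  (1 - g)^-1 * (1 - s)^-1 <= (1 - (s + g))^-1.
Proof.
move=> s0 g0 sg; have p1 : 0 < 1 - s by lra.
have p3 : 0 < 1 - g by lra.
have p2 : 0 < 1 - (s + g) by lra.
rewrite -invfM lef_pV2 ?posrE ?mulr_gt0 //; nra.
Qed.

Lemma inv_sub_le2 (s : R) : s <= 1/2 -> (1 - s)^-1 <= 2.
Proof. by move=> s12; rewrite -[2]invrK lef_pV2 ?posrE; lra. Qed.

(* Choice of radius: |y| <= (b / K)^(1/alpha) forces K |y|^alpha <= b. *)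
Lemma powR_small (alpha K b y : R) : 0 < alpha -> 0 < K -> 0 <= b ->
  0 <= y -> y <= (b / K) `^ alpha^-1 -> K * y `^ alpha <= b.
Proof.
move=> a0 K0 b0 y0 yb.
have : y `^ alpha <= ((b / K) `^ alpha^-1) `^ alpha.
  by apply: ge0_ler_powR; rewrite ?nnegrE ?powR_ge0 //; exact: ltW.
rewrite -powRrM mulVf ?gt_eqF // powRr1; last exact: divr_ge0 b0 (ltW K0).
by move=> h; rewrite mulrC -ler_pdivlMr.
Qed.

End RealEstimates.

Section PerturbedProducts.
Variables (R : realType) (d : nat) (kappa : R).
Variables (P A Q J : nat -> 'M[R]_d) (g : nat -> R).
Hypothesis P_conf : forall n, conformal kappa (P n).
Hypothesis A_unit : forall n, A n \in unitmx.
Hypothesis P_succ : forall n, P n.+1 = P n *m A n.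
Hypothesis Q_succ : forall n, Q n.+1 = Q n *m J n.
Hypothesis Q0 : Q 0 = P 0.
Hypothesis g_ge0 : forall n, 0 <= g n.
Hypothesis g_sum : forall n, \sum_(k < n) g k <= 1/2.
Hypothesis g_bound :
  forall n, opnorm (P n *m ((J n - A n) *m invmx (A n)) *m invmx (P n)) <= g n.

Let M n := Q n *m invmx (P n).
Let G n := P n *m ((J n - A n) *m invmx (A n)) *m invmx (P n).
Let S n := \sum_(k < n) g k.

Lemma M_succ n : M n.+1 = M n *m (1%:M + G n).
Proof.
have uP := (P_conf n).1.
rewrite /M /G P_succ Q_succ invmxM // mulmxDr mulmx1 !mulmxA mulmxKV //.
rewrite !mulmxBr !mulmxBl mulmxK // addrC subrK.
by rewrite -!mulmxA.
Qed.

Lemma M_bounds n : [/\ M n \in unitmx, opnorm (M n) <= (1 - S n)^-1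
                     & opnorm (invmx (M n)) <= (1 - S n)^-1].
Proof.
elim: n => [|n [uM hM hMi]].
  have -> : M 0 = 1%:M by rewrite /M Q0 mulmxV ?(P_conf 0).1.
  by rewrite /S big_ord0 subr0 invr1 invmx1 unitmx1 opnorm1.
have SS : S n.+1 = S n + g n by rewrite /S big_ord_recr.
have S0 : 0 <= S n by apply: sumr_ge0 => k _; exact: g_ge0.
have Sg : S n + g n <= 1/2 by rewrite -SS g_sum.
have g1 : g n < 1 by have := g_ge0 n; lra.
have [uG iG] := pert_inv (g_bound n) g1.
rewrite M_succ SS; split.
- by rewrite unitmx_mul uM.
- apply: le_trans (opnormM _ _) _; apply: le_trans (inv_sub_mulD S0 (g_ge0 n) Sg).
  apply: ler_pM; rewrite ?opnorm_ge0 //.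
  by apply: le_trans (opnormD _ _) _; apply: lerD; rewrite ?opnorm1 ?g_bound.
- rewrite invmxM //; apply: le_trans (opnormM _ _) _.
  apply: le_trans (inv_sub_mul S0 (g_ge0 n) Sg).
  by apply: ler_pM; rewrite ?opnorm_ge0.
Qed.

Lemma perturbed_product_conformal n : conformal (4 * kappa) (Q n).
Proof.
have [uM hM hMi] := M_bounds n.
have -> : Q n = M n *m P n by rewrite /M mulmxKV ?(P_conf n).1.
apply: conformalM (P_conf n); split => //.
have S2 : (1 - S n)^-1 <= 2 by apply: inv_sub_le2; exact: g_sum.
have -> : (4 : R) = 2 * 2 by rewrite -natrM.
by apply: ler_pM; rewrite ?opnorm_ge0 // (le_trans _ S2).
Qed.

End PerturbedProducts.

Section ContractingSequence.
Variables (R : realType) (d : nat) (Rr C lamL lamU alpha kappa : R).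
Variable hs : nat -> 'rV[R]_d -> 'rV[R]_d.
Hypotheses (Rr_gt0 : 0 < Rr) (C_ge0 : 0 <= C) (lamL_gt0 : 0 < lamL).
Hypotheses (lamU_ge0 : 0 <= lamU) (lamU_le1 : lamU <= 1) (alpha_gt0 : 0 < alpha).
Hypothesis hs_diff : forall j z, Bball Rr z -> differentiable (hs j) z.
Hypothesis hs_fix0 : forall j, hs j 0 = 0.
Hypothesis hs_jac : forall j z, Bball Rr z ->
  lamL <= mnorm (jac (hs j) z) /\ opnorm (jac (hs j) z) <= lamU.
Hypothesis hs_holder : forall j y, Bball Rr y -> enorm y < 1 ->
  opnorm (jac (hs j) y - jac (hs j) 0) <= C * enorm y `^ alpha.
Hypothesis hs_conf : forall n, conformal kappa (jac (iter_seq hs n) 0).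

Lemma iter_seq_at0 n : iter_seq hs n 0 = 0.
Proof. by elim: n => [//|n IH] /=; rewrite IH hs_fix0. Qed.

Lemma enorm_iter x n : Bball Rr x -> enorm (iter_seq hs n x) <= lamU ^+ n * enorm x.
Proof.
move=> xB; elim: n => [|n IH]; first by rewrite expr0 mul1r.
have yB : Bball Rr (iter_seq hs n x).
  rewrite /Bball /=; apply: le_lt_trans IH _; apply: le_lt_trans xB.
  by apply: ler_piMl; [exact: enorm_ge0 | exact: exprn_ile1].
rewrite /= exprS -mulrA.
apply: le_trans (contract (hs_diff n) (fun z zB => (hs_jac n zB).2) (hs_fix0 n) yB) _.
exact: ler_wpM2l.
Qed.

Lemma iter_in_ball (r : R) x n : Bball Rr x -> Bball r x -> Bball r (iter_seq hs n x).
Proof.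
move=> xR xr; rewrite /Bball /=; apply: le_lt_trans (enorm_iter n xR) _.
apply: le_lt_trans xr; apply: ler_piMl; [exact: enorm_ge0 | exact: exprn_ile1].
Qed.

Lemma jac_iter_succ x n : Bball Rr x ->
  jac (iter_seq hs n.+1) x = jac (iter_seq hs n) x *m jac (hs n) (iter_seq hs n x).
Proof.
move=> xB; have orbit k := iter_in_ball k xB xB.
apply: jac_comp; last exact: hs_diff.
elim: n => [|n IH]; first exact: ex_diff.
exact: differentiable_comp IH (hs_diff _ (orbit n)).
Qed.

Lemma jac_gap x n : Bball Rr x -> enorm x < 1 ->
  opnorm (jac (hs n) (iter_seq hs n x) - jac (hs n) 0)
    <= C * ((lamU `^ alpha) ^+ n * enorm x `^ alpha).
Proof.
move=> xB x1; have y1 : enorm (iter_seq hs n x) < 1 := iter_in_ball n xB x1.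
apply: le_trans (hs_holder n (iter_in_ball n xB xB) y1) _.
have powX : (lamU ^+ n) `^ alpha = (lamU `^ alpha) ^+ n.
  by rewrite -powR_mulrn // -powRrM mulrC powRrM powR_mulrn // powR_ge0.
rewrite ler_wpM2l // -powX -powRM ?exprn_ge0 ?enorm_ge0 //.
apply: ge0_ler_powR; first exact: ltW.
- by rewrite nnegrE enorm_ge0.
- by rewrite nnegrE mulr_ge0 ?exprn_ge0 ?enorm_ge0.
- exact: enorm_iter.
Qed.

Lemma jac0_inv j :
  jac (hs j) 0 \in unitmx /\ opnorm (invmx (jac (hs j) 0)) <= lamL^-1.
Proof.
have B0 : Bball Rr (0 : 'rV[R]_d) by rewrite /Bball /= enorm0.
have [m1 _] := hs_jac j B0; have m0 := lt_le_trans lamL_gt0 m1.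
have [u i] := mnorm_inv m0; split => //; apply: le_trans i _.
by rewrite lef_pV2 ?posrE.
Qed.

Lemma iterates_conformal x n : Bball Rr x -> enorm x < 1 -> lamU `^ alpha < 1 ->
  kappa * C / lamL * enorm x `^ alpha <= (1 - lamU `^ alpha) / 2 ->
  conformal (4 * kappa) (jac (iter_seq hs n) x).
Proof.
move=> xB x1; set q := lamU `^ alpha; set eps := kappa * C / lamL * enorm x `^ alpha.
move=> q1 small.
have q0 : 0 <= q by exact: powR_ge0.
have kappa0 : 0 <= kappa.
  by apply: le_trans (hs_conf 0).2; rewrite mulr_ge0 ?opnorm_ge0.
have eps0 : 0 <= eps by rewrite /eps mulr_ge0 ?powR_ge0 // divr_ge0 ?mulr_ge0 // ltW.
have B0 : Bball Rr (0 : 'rV[R]_d) by rewrite /Bball /= enorm0.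
apply: (@perturbed_product_conformal _ _ _ (fun k => jac (iter_seq hs k) 0)
  (fun k => jac (hs k) 0) (fun k => jac (iter_seq hs k) x)
  (fun k => jac (hs k) (iter_seq hs k x)) (fun k => eps * q ^+ k)) => [k|k|k|k||k|k|k].
- exact: hs_conf.
- exact: (jac0_inv k).1.
- by have := jac_iter_succ k B0; rewrite iter_seq_at0.
- exact: jac_iter_succ.
- by rewrite !jac_id.
- by rewrite mulr_ge0 ?exprn_ge0.
- rewrite -mulr_sumr; apply: le_trans (_ : eps * (1 - q)^-1 <= _).
    by rewrite ler_wpM2l ?geom_le.
  by rewrite ler_pdivrMr ?subr_gt0 //; move: small; lra.
- have -> : eps * q ^+ k = kappa * (C * (q ^+ k * enorm x `^ alpha) * lamL^-1).
    by rewrite /eps; ring.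
  apply: le_trans (opnorm_conj _ _) _.
  apply: ler_pM; rewrite ?mulr_ge0 ?opnorm_ge0 ?(hs_conf k).2 //.
  apply: le_trans (opnormM _ _) _.
  by apply: ler_pM; rewrite ?opnorm_ge0 ?jac_gap ?(jac0_inv k).2.
Qed.

End ContractingSequence.

(* The sequence {h_j}_{j>=1} is encoded as hs : nat -> _, with h_j = hs (j-1). *)
Theorem mainTheorem7 (R : realType) (d : nat) (Rr C kappa lamU lamL alpha : R) :
  0 < Rr -> 0 < C -> 1 <= kappa -> lamU < 1 -> 0 < lamL -> lamL < lamU ->
  0 < alpha < 1 ->
  exists xi0 : R, exists kappabar : R, 0 < xi0 /\ 1 < kappabar /\
  forall hs : nat -> 'rV[R]_d -> 'rV[R]_d,
    (forall j : nat,
      [/\ C1alpha_diffeo Rr alpha (hs j) /\ hs j 0 = 0,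
          (C1alpha_norm Rr alpha (hs j) < C%:E)%E,
          (forall y, Bball Rr y ->
             lamL < mnorm (jac (hs j) y) /\ mnorm (jac (hs j) y) <= opnorm (jac (hs j) y)
             /\ opnorm (jac (hs j) y) < lamU) &
          conformal kappa (jac (iter_seq hs j.+1) 0)]) ->
    forall x, Bball xi0 x -> forall n : nat,
      conformal kappabar (jac (iter_seq hs n) x).
Proof.
move=> Rr0 C0 k1 lamU1 lamL0 lamLU /andP[alpha0 alpha1].
have lamU0 : 0 < lamU by apply: lt_trans lamLU.
set q := lamU `^ alpha; set K := kappa * C / lamL.
have q1 : q < 1.
  have one : (1 : R) `^ alpha = 1 by rewrite powR1.
  by rewrite /q -one; apply: gt0_ltr_powR; rewrite ?nnegrE // ltW.
have K0 : 0 < K by rewrite /K divr_gt0 ?mulr_gt0 //; lra.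
set t := ((1 - q) / 2) / K.
have t0 : 0 < t by apply: divr_gt0 K0; apply: divr_gt0; rewrite ?subr_gt0.
set xi0 := Num.min (Num.min 1 Rr) (t `^ alpha^-1).
exists xi0, (4 * kappa); split; first by rewrite !lt_min ltr01 Rr0 powR_gt0.
split; first lra.
move=> hs H x xB n.
have [[x1 xR] xK] : (enorm x < 1 /\ enorm x < Rr) /\ enorm x <= t `^ alpha^-1.
  by move: xB; rewrite /Bball /= !lt_min => /andP[/andP[-> ->] /ltW].
apply: (iterates_conformal Rr0 (ltW C0) lamL0 (ltW lamU0) (ltW lamU1) alpha0
  (hs := hs) _ _ _ _ _ n xR x1 q1).
- by move=> j z zB; have [[[[dh _] _ _ _ _] _] _ _ _] := H j; exact: dh.
- by move=> j; have [[_ ->] _ _ _] := H j.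
- move=> j z zB; have [_ _ /(_ z zB) [mL [_ oU]] _] := H j.
  by split; apply: ltW.
- move=> j y yB y1; have [_ hC _ _] := H j.
  exact: holder_at0 hC (ltW C0) Rr0 yB y1.
- by case=> [|j]; [rewrite jac_id; exact: conformal1 | have [_ _ _ ?] := H j].
- by apply: (powR_small alpha0 K0 _ (enorm_ge0 x) xK); lra.
Qed.
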